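(* Let $\sigma=(M_1,M_2)$ be a schedule with machine 1 critical, and $k\ge1$. Suppose there exist sets $S'\subseteq M_1$ and $S''\subseteq M_2$ with $|S'|+|S''|=k$ and $0<\sum_{j\in S'}p_j-\sum_{j\in S''}p_j<\Delta$. If the randomized $k$-swap algorithm is repeated (with independent randomness) $\gamma=\dfrac{2^k}{\binom{k}{\lceil k/2\rceil}}$ times, the probability that it fails to find an improving schedule is at most $\frac1e$.
   Context: Problem $P2\|C_{\max}$: $n$ jobs with processing times $p_j>0$, two identical machines. A schedule $\sigma=(M_1,M_2)$ partitions the jobs into sets processed on machines 1 and 2; loads $L_i=\sum_{j\in M_i}p_j$, makespan $L_{\max}=\max_iL_i$, $L_{\min}=\min_iL_i$, $\Delta=L_{\max}-L_{\min}$; a machine with load $L_{\max}$ is critical. An improving schedule is one with strictly smaller makespan. Randomized $k$-swap algorithm (input $\sigma$, $k$; machine 1 critical): (1) assign each job independently and uniformly at random to $A$ or $B$; (2) for every $S_1\subseteq A$ with $|S_1|=\lceil k/2\rceil$ put $\sum_{j\in S_1\cap M_1}p_j-\sum_{j\in S_1\cap M_2}p_j$ (with reference to $S_1$) into $A_\Sigma$; (3) for every $S_2\subseteq B$ with $|S_2|=\lfloor k/2\rfloor$ put $\sum_{j\in S_2\cap M_1}p_j-\sum_{j\in S_2\cap M_2}p_j$ into $B_\Sigma$; (4) sort $B_\Sigma$ non-decreasingly; (5) for each $x\in A_\Sigma$ binary-search for $y\in B_\Sigma$ with $-x<y<\Delta-x$; if found, interchange the machine assignments of all jobs of the corresponding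 $S_1\cup S_2$ and return True (the algorithm succeeds); (6) otherwise return False (the algorithm fails). *)

From HB Require Import structures.
From mathcomp Require Import all_boot all_order all_algebra.
From mathcomp Require Import reals sequences.
Set Implicit Arguments. Unset Strict Implicit. Unset Printing Implicit Defensive.
Import Order.TTheory GRing.Theory Num.Theory.
Local Open Scope ring_scope.

(* Jobs are 'I_n, processing times p : 'I_n -> R.  A schedule is given by the
   set M1 of jobs on machine 1; machine 2 gets the complement ~: M1. *)
Section Sched.
Variables (R : realType) (n : nat) (p : 'I_n -> R) (M1 : {set 'I_n}).

Definition load (M : {set 'I_n}) : R := \sum_(j in M) p j.

(* Delta = L_max - L_min; used when machine 1 is critical, i.e. L_max = L_1. *)
Definition Delta : R := load M1 - load (~: M1).

Definition swap_val (S : {set 'I_n}) : R :=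
  load (S :&: M1) - load (S :&: ~: M1).

(* One run of the randomized k-swap algorithm, given the random assignment
   a : job -> bool (a j = true means j in A, false means j in B).
   The run returns True iff some x in A_Sigma and y in B_Sigma satisfy
   -x < y < Delta - x (which is exactly what steps (4)-(5) search for). *)
Definition kswap_succeeds (k : nat) (a : {ffun 'I_n -> bool}) : bool :=
  [exists S1 : {set 'I_n}, exists S2 : {set 'I_n},
     [&& S1 \subset [set j | a j], S2 \subset [set j | ~~ a j],
         #|S1| == uphalf k, #|S2| == k./2,
         - swap_val S1 < swap_val S2 & swap_val S2 < Delta - swap_val S1]].

End Sched.

(* number of repetitions: gamma = 2^k / C(k, ceil(k/2)), rounded up to an
   integer number of runs. *)
Definition ceil_divn (a b : nat) : nat := (a + b.-1) %/ b.
Definition gamma_runs (k : nat) : nat := ceil_divn (2 ^ k) 'C(k, uphalf k).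

(* Probability that all m independent runs fail: the random bits of the
   m runs form a uniformly distributed w : 'I_m -> ('I_n -> bool). *)
Definition fail_prob (R : realType) (n : nat) (p : 'I_n -> R) (M1 : {set 'I_n})
  (k m : nat) : R :=
  #|[set w : {ffun 'I_m -> {ffun 'I_n -> bool}} |
      [forall i, ~~ kswap_succeeds p M1 k (w i)]]|%:R /
  #|{: {ffun 'I_m -> {ffun 'I_n -> bool}}}|%:R.

From mathcomp Require Import all_boot all_order all_algebra.
From mathcomp Require Import reals sequences exp zify ring lra.
Set Implicit Arguments. Unset Strict Implicit. Unset Printing Implicit Defensive.
Import Order.TTheory GRing.Theory Num.Theory.

(* Let S = S' :|: S''.  Whenever the random partition puts exactly uphalf k
   jobs of S into A, the pair (S :&: A, S :\: A) is one of the candidates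
   examined by the algorithm, and its two swap values add up to the swap value
   of S, which lies strictly between 0 and Delta; so the run succeeds.  This
   happens for 'C(k, uphalf k) * 2 ^ (n - k) of the 2 ^ n partitions, hence
   all gamma runs fail with probability at most
   (1 - 'C(k, uphalf k) / 2 ^ k) ^ gamma <= exp (- gamma 'C(k, uphalf k) / 2 ^ k) <= 1 / e. *)

Section BooleanFunctions.
Variable T : finType.

Lemma card_ffun_trace (S X : {set T}) : X \subset S ->
  #|[set a : {ffun T -> bool} | S :&: [set j | a j] == X]| = 2 ^ #|~: S|.
Proof.
move=> XS.
pose F j := if j \in S then pred1 (j \in X) else predT.
have -> : #|[set a : {ffun T -> bool} | S :&: [set j | a j] == X]| = #|family F|.
  apply: eq_card => a; rewrite inE; apply/eqP/familyP => [eqX j | aF].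
    by rewrite /F -eqX; case: ifP => // jS; rewrite !inE jS.
  apply/setP => j; rewrite !inE; have := aF j; rewrite /F.
  case: ifP => [_ /eqP // | jS _].
  by apply/esym/negbTE; apply: contraFN jS => /(subsetP XS).
rewrite card_family foldrE big_map big_enum (bigID (mem S)) /=.
rewrite big1 => [|j jS]; last by rewrite /F jS card1.
rewrite mul1n (eq_bigr (fun _ => 2)) => [|j /negbTE jS]; last by rewrite /F jS card_bool.
by rewrite prod_nat_const; congr (_ ^ _); apply: eq_card => j; rewrite !inE.
Qed.

Lemma card_ffun_trace_card (S : {set T}) (h : nat) :
  #|[set a : {ffun T -> bool} | #|S :&: [set j | a j]| == h]| = 'C(#|S|, h) * 2 ^ #|~: S|.
Proof.
rewrite -sum1_card (partition_big (fun a : {ffun T -> bool} => S :&: [set j | a j])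
   (mem [set X : {set T} | X \subset S & #|X| == h])) /=; last first.
  by move=> a; rewrite !inE subsetIl.
rewrite -cards_draws -sum_nat_const; apply: eq_bigr => X; rewrite inE => /andP [XS hX].
rewrite -(card_ffun_trace XS) -sum1_card; apply: eq_bigl => a.
by rewrite !inE; case: (_ =P X) => [->|]; rewrite ?hX ?andbF.
Qed.

End BooleanFunctions.

Lemma card_ffun_all (I T : finType) (P : pred T) :
  #|[set w : {ffun I -> T} | [forall i, P (w i)]]| = #|P| ^ #|I|.
Proof.
rewrite -card_ffun_on; apply: eq_card => w.
by rewrite inE; apply/forallP/ffun_onP.
Qed.

Lemma leq_ceil_divn a b : 0 < b -> a <= ceil_divn a b * b.
Proof.
move=> b0; rewrite /ceil_divn.
have := divn_eq (a + b.-1) b; have := ltn_pmod (a + b.-1) b0; lia.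
Qed.

Local Open Scope ring_scope.

Lemma exprn_le_expRN1 (R : realType) (x c : R) (m : nat) :
  0 <= x -> x <= 1 - c -> 1 <= m%:R * c -> x ^+ m <= (expR 1)^-1.
Proof.
move=> x0 xc mc.
have xe : x <= expR (- c) := le_trans xc (expR_ge1Dx _).
apply: le_trans (_ : expR (- c) ^+ m <= _).
  by apply: lerXn2r; rewrite ?nnegrE ?expR_ge0 // (le_trans x0 xe).
by rewrite -expRM_natl -expRN ler_expR mulrN lerN2.
Qed.

Lemma ratio_le_1_sub (R : realFieldType) (F C K D : nat) :
  (0 < K)%N -> (0 < D)%N -> (F + C * D <= K * D)%N ->
  F%:R / (K * D)%:R <= 1 - C%:R / K%:R :> R.
Proof.
move=> K0 D0; rewrite -(ler_nat R) natrD !natrM => le_FCD.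
have K0' : 0 < K%:R :> R by rewrite ltr0n.
have D0' : 0 < D%:R :> R by rewrite ltr0n.
have -> : 1 - C%:R / K%:R = (K%:R * D%:R - C%:R * D%:R) / (K%:R * D%:R) :> R.
  by field; rewrite !gt_eqF.
by rewrite ler_pM2r ?invr_gt0 ?mulr_gt0 //; lra.
Qed.

Section Swaps.
Variables (R : realType) (n : nat) (p : 'I_n -> R) (M1 : {set 'I_n}).

Lemma swap_valE (S : {set 'I_n}) :
  swap_val p M1 S = \sum_(j in S) (if j \in M1 then p j else - p j).
Proof.
rewrite /swap_val /load [RHS](big_setID M1) setDE /=; congr (_ + _).
  by apply: eq_bigr => j /setIP [_ ->].
by rewrite -sumrN; apply: eq_bigr => j /setIP [_]; rewrite inE => /negbTE ->.
Qed.

Lemma swap_valID (S A : {set 'I_n}) :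
  swap_val p M1 S = swap_val p M1 (S :&: A) + swap_val p M1 (S :\: A).
Proof. by rewrite !swap_valE (big_setID A). Qed.

Lemma swap_val_split (S' S'' : {set 'I_n}) : S' \subset M1 -> S'' \subset ~: M1 ->
  swap_val p M1 (S' :|: S'') = load p S' - load p S''.
Proof.
move=> s1 s2.
have /eqP e1 : S'' :&: M1 == set0 by rewrite setI_eq0 disjoints_subset.
have /eqP e2 : S' :&: ~: M1 == set0 by rewrite setI_eq0 disjoints_subset setCK.
by rewrite /swap_val !setIUl (setIidPl s1) (setIidPl s2) e1 e2 setU0 set0U.
Qed.

Lemma kswap_succeeds_balanced k (a : {ffun 'I_n -> bool}) (S : {set 'I_n}) :
  #|S| = k -> 0 < swap_val p M1 S < Delta p M1 ->
  #|S :&: [set j | a j]| = uphalf k -> kswap_succeeds p M1 k a.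
Proof.
move=> cS /andP [pos ltD] cA; set A := [set j | a j] in cA.
have cD : #|S :\: A| = k./2.
  have := cardsID A S; rewrite cA cS uphalf_half; have := odd_double_half k.
  rewrite -addnn; move: (k./2) #|S :\: A| => h d; case: (odd k) => /=; lia.
apply/existsP; exists (S :&: A); apply/existsP; exists (S :\: A).
rewrite subsetIr cA cD !eqxx /=.
apply/andP; split; first by apply/subsetP => j; rewrite !inE => /andP [].
by rewrite (swap_valID S A) in pos ltD; apply/andP; split; lra.
Qed.

Lemma card_kswap_fails k (S : {set 'I_n}) :
  #|S| = k -> 0 < swap_val p M1 S < Delta p M1 ->
  (#|[set a | ~~ kswap_succeeds p M1 k a]| + 'C(k, uphalf k) * 2 ^ (n - k) <= 2 ^ n)%N.
Proof.
move=> cS sw.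
have cC : #|~: S| = (n - k)%N by have := cardsC S; rewrite card_ord; lia.
have balanced_succeed :
    [set a : {ffun 'I_n -> bool} | #|S :&: [set j | a j]| == uphalf k]
    \subset [set a | kswap_succeeds p M1 k a].
  by apply/subsetP => a; rewrite !inE => /eqP; apply: kswap_succeeds_balanced.
have := subset_leq_card balanced_succeed; rewrite card_ffun_trace_card cS cC.
have := cardsC [set a : {ffun 'I_n -> bool} | kswap_succeeds p M1 k a].
rewrite card_ffun card_bool card_ord.
have -> : #|~: [set a : {ffun 'I_n -> bool} | kswap_succeeds p M1 k a]|
          = #|[set a | ~~ kswap_succeeds p M1 k a]| by apply: eq_card => a; rewrite !inE.
by move=> <-; rewrite addnC leq_add2r.
Qed.

Lemma fail_probE k m :
  fail_prob p M1 k m = (#|[set a | ~~ kswap_succeeds p M1 k a]|%:R / (2 ^ n)%:R) ^+ m.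
Proof.
rewrite /fail_prob (card_ffun_all _ (fun a => ~~ kswap_succeeds p M1 k a)).
rewrite !card_ffun card_bool !card_ord !natrX -expr_div_n.
by congr ((_%:R / _) ^+ _); apply: eq_card => a; rewrite !inE.
Qed.

End Swaps.

Theorem lemma1 (R : realType) (n : nat) (p : 'I_n -> R) (M1 : {set 'I_n}) (k : nat)
  (hp : forall j, 0 < p j)
  (hcrit : load p (~: M1) <= load p M1)
  (hk : (1 <= k)%N)
  (hS : exists S' S'' : {set 'I_n},
      [/\ S' \subset M1, S'' \subset ~: M1, (#|S'| + #|S''| = k)%N,
          0 < load p S' - load p S'' & load p S' - load p S'' < Delta p M1]) :
  fail_prob p M1 k (gamma_runs k) <= (expR (1 : R))^-1.
Proof.
case: hS => S' [S'' [s1 s2 cS' pos ltD]]; set S := S' :|: S''.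
have /eqP disj : S' :&: S'' == set0.
  by rewrite setI_eq0 (disjointWl s1) // disjoint_sym disjoints_subset.
have cS : #|S| = k by rewrite cardsU disj cards0 subn0.
have kn : (k <= n)%N by rewrite -cS -[X in (_ <= X)%N]card_ord max_card.
have sw : 0 < swap_val p M1 S < Delta p M1 by rewrite swap_val_split // pos ltD.
have := card_kswap_fails cS sw; rewrite fail_probE.
set F := #|_|; set C := 'C(k, uphalf k) => hF.
have C0 : (0 < C)%N by rewrite bin_gt0 uphalf_half; have := odd_double_half k; lia.
have e2 : (2 ^ n = 2 ^ k * 2 ^ (n - k))%N by rewrite -expnD subnKC.
apply: (exprn_le_expRN1 (c := C%:R / (2 ^ k)%:R)); first by rewrite divr_ge0.
  by rewrite e2 ratio_le_1_sub ?expn_gt0 // -e2.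
rewrite mulrA ler_pdivlMr ?ltr0n ?expn_gt0 // mul1r -natrM ler_nat.
exact: leq_ceil_divn.
Qed.
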